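(* With $\mu_n=\{p/n:p\in\mathbb Z,\ |p/n|\le n\}$, $\Lambda_{\mathbb Q}=\{\mu_{m!}:m\in\mathbb N\}$, $I$ a fine ideal of $\mathfrak F(\mathcal P_{fin}(\mathbb Q),\mathbb R)$ containing $I_{0,\Lambda_{\mathbb Q}}$, and $J$ the canonical projection, put $\alpha=\mathfrak n(\mathbb N)=J(\lambda\mapsto|\lambda\cap\mathbb N|)$. Then $\mathfrak n(\mathbb Q^+)=\alpha^2$ and $\mathfrak n(\mathbb Q)=2\alpha^2+1$, and hence in the NAP-space produced by $(\mathbb Q,1,I)$, $P(\mathbb N)=\dfrac{\alpha}{2\alpha^2+1}$.
   Context: $\mathbb N=\{1,2,3,\dots\}$, $\mathbb Q^+=\{x\in\mathbb Q:x>0\}$. $\mathcal P_{fin}(\Omega)$ is the set of finite subsets of $\Omega$ and $\mathfrak F=\mathfrak F(\mathcal P_{fin}(\Omega),\mathbb R)$ the real algebra of functions $\mathcal P_{fin}(\Omega)\to\mathbb R$ with pointwise operations. For $\omega\in\Omega$, $\chi_\lambda(\omega)=1$ if $\omega\in\lambda$, else $0$. An ideal $I$ of $\mathfrak F$ is fine if it is maximal and $\lambda\mapsto 1-\chi_\lambda(\omega)$ lies in $I$ for every $\omega\in\Omega$. For $\Lambda\subseteq\mathcal P_{fin}(\Omega)$, $I_{0,\Lambda}=\{\varphi\in\mathfrak F:\varphi(\lambda)=0\text{ for all }\lambda\in\Lambda\}$. The NAP-space produced by $(\Omega,1,I)$ has $P(A)=J(\lambda\mapsto|A\cap\lambda|)/J(\lambda\mapsto|\lambda|)$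 with $J$ the canonical projection $\mathfrak F\to\mathfrak F/I$; the numerosity of $A\subseteq\Omega$ is $\mathfrak n(A)=J(\lambda\mapsto|A\cap\lambda|)$ (equivalently $P(A)/P(\{\omega\})$). *)

From mathcomp Require Import all_boot all_order all_algebra.
From Stdlib Require Import Reals.
Set Implicit Arguments. Unset Strict Implicit. Unset Printing Implicit Defensive.
Import Order.TTheory GRing.Theory Num.Theory.

Section RatPart.
Local Open Scope ring_scope.

(* A finite subset of Q is represented canonically by the strictly
   increasing list of its elements. *)
Definition Pfin : Type := {s : seq rat | sorted (fun x y : rat => x < y) s}.

Definition mem_fin (x : rat) (l : Pfin) : bool := x \in sval l.

Definition natpos : pred rat := fun x => (denq x == 1) && (0 < numq x).
Definition posrat : pred rat := fun x => 0 < x.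
Definition allrat : pred rat := predT.

Definition in_mu (n : nat) (x : rat) : Prop :=
  exists p : int, x = (p%:~R / n%:R) /\ `|x| <= n%:R.

Definition in_LambdaQ (l : Pfin) : Prop :=
  exists m : nat, leq 1 m /\ forall x : rat, mem_fin x l <-> in_mu (m`!) x.

Definition card_in (A : pred rat) (l : Pfin) : nat := count A (sval l).
End RatPart.

Local Open Scope R_scope.

Definition FF := Pfin -> R.

Definition is_ideal (I : FF -> Prop) : Prop :=
  I (fun _ => 0) /\
  (forall f g, I f -> I g -> I (fun l => f l + g l)) /\
  (forall f g, I f -> I (fun l => g l * f l)).

Definition is_maximal_ideal (I : FF -> Prop) : Prop :=
  is_ideal I /\ ~ I (fun _ => 1) /\
  forall K : FF -> Prop, is_ideal K -> (forall f, I f -> K f) ->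
    (forall f, K f -> I f) \/ K (fun _ => 1).

Definition chi (l : Pfin) (w : rat) : R := if mem_fin w l then 1 else 0.

Definition fine_ideal (I : FF -> Prop) : Prop :=
  is_maximal_ideal I /\ forall w : rat, I (fun l => 1 - chi l w).

Definition I0LambdaQ (phi : FF) : Prop := forall l, in_LambdaQ l -> phi l = 0.

(* ---------- the quotient F / I, elements = cosets f + I ---------- *)
Definition FQ := FF -> Prop.

Definition J (I : FF -> Prop) (f : FF) : FQ := fun g => I (fun l => f l - g l).

Definition qconst (I : FF -> Prop) (r : R) : FQ := J I (fun _ => r).
Definition qadd (I : FF -> Prop) (X Y : FQ) : FQ :=
  fun h => exists f g, X = J I f /\ Y = J I g /\ I (fun l => h l - (f l + g l)).
Definition qmul (I : FF -> Prop) (X Y : FQ) : FQ :=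
  fun h => exists f g, X = J I f /\ Y = J I g /\ I (fun l => h l - f l * g l).
Definition qdiv (I : FF -> Prop) (X Y : FQ) : FQ :=
  fun h => exists f g, X = J I f /\ Y = J I g /\ I (fun l => h l * g l - f l).

Definition numerosity (I : FF -> Prop) (A : pred rat) : FQ :=
  J I (fun l => INR (card_in A l)).

Definition NAP_P (I : FF -> Prop) (A : pred rat) : FQ :=
  qdiv I (numerosity I A) (J I (fun l => INR (card_in allrat l))).

(* For n > 0 the grid mu_n = { p/n : p in Z, |p/n| <= n } has exactly
   n elements in N = {1,..,n}, n^2 elements in Q^+ (the k/n with
   1 <= k <= n^2) and 2n^2 + 1 elements in all (the (k - n^2)/n with
   0 <= k <= 2n^2).  Hence on every lambda in Lambda_Q the counting
   functions satisfy |lambda cap Q^+| = |lambda cap N|^2 and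
   |lambda| = 2 |lambda cap N|^2 + 1.  Since I contains I_{0,Lambda_Q},
   two functions agreeing on Lambda_Q have the same image under J, and J
   turns pointwise sums and products into the sums and products of F/I.
   The three identities of the theorem follow; the one for P(N) is the
   identity for n(Q) inserted into the definition of P. *)
From mathcomp Require Import all_boot all_order all_algebra.
From mathcomp Require Import zify.
Import Order.TTheory GRing.Theory Num.Theory.

Set Implicit Arguments.
Unset Strict Implicit.
Unset Printing Implicit Defensive.

Section GridCounting.
Local Open Scope ring_scope.

Variable n : nat.
Hypothesis n_gt0 : (0 < n)%N.

Let n_neq0 : (n%:R : rat) != 0.
Proof. by rewrite pnatr_eq0 -lt0n. Qed.

Lemma mu_bound (p : int) :
  (`|p%:~R / n%:R| <= n%:R :> rat) = (`|p| <= Posz (n * n)%N).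
Proof.
rewrite normrM normfV (ger0_norm (ler0n _ _)) -intr_norm ler_pdivrMr ?ltr0n //.
by rewrite -natrM -(ler_int rat).
Qed.

Definition grid_nat : seq rat := map (fun k : nat => k%:R) (iota 1 n).
Definition grid_pos : seq rat :=
  map (fun k : nat => k%:R / n%:R) (iota 1 (n * n)).
Definition grid_all : seq rat :=
  map (fun k : nat => (Posz k - Posz (n * n)%N)%:~R / n%:R)
      (iota 0 (n * n).*2.+1).

Lemma grid_nat_uniq : uniq grid_nat.
Proof. by rewrite map_inj_uniq ?iota_uniq // => a b /eqP; rewrite eqr_nat => /eqP. Qed.

Lemma grid_pos_uniq : uniq grid_pos.
Proof.
rewrite map_inj_uniq ?iota_uniq // => a b.
by move/(mulIf (invr_neq0 n_neq0))/eqP; rewrite eqr_nat => /eqP.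
Qed.

Lemma grid_all_uniq : uniq grid_all.
Proof.
rewrite map_inj_uniq ?iota_uniq // => a b.
by move/(mulIf (invr_neq0 n_neq0))/intr_inj/addIr => -[].
Qed.

Lemma mem_grid_nat (x : rat) : (in_mu n x /\ natpos x) <-> x \in grid_nat.
Proof.
split.
- move=> [[p [_ x_le]] /andP[/eqP x_den x_num]].
  set k := absz (numq x); have num_k : numq x = Posz k by rewrite /k; lia.
  have x_k : x = k%:R by rewrite -[k%:R]/((Posz k)%:~R) -num_k numqE x_den mulr1.
  apply/mapP; exists k => //.
  rewrite mem_iota; move: x_le; rewrite x_k normr_nat ler_nat; lia.
- move=> /mapP[k]; rewrite mem_iota => /andP[k_ge1 k_le] ->; split.
  + exists (Posz (k * n)%N); split; last by rewrite normr_nat ler_nat; lia.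
    by rewrite -[(Posz _)%:~R]/((k * n)%N%:R) natrM mulfK.
  + rewrite /natpos -[(k%:R : rat)]/((Posz k)%:~R) numq_int denq_int eqxx /=; lia.
Qed.

Lemma mem_grid_pos (x : rat) : (in_mu n x /\ posrat x) <-> x \in grid_pos.
Proof.
split.
- move=> [[p [-> p_le]] p_pos]; move: p_le p_pos; rewrite mu_bound => p_le p_pos.
  have p_gt0 : 0 < p.
    by move: p_pos; rewrite /posrat pmulr_lgt0 ?invr_gt0 ?ltr0n // ltr0z.
  apply/mapP; exists (absz p); first by rewrite mem_iota; lia.
  by congr (_ / _); rewrite -[(_ %:R : rat)]/((Posz _)%:~R); congr _%:~R; lia.
- move=> /mapP[k]; rewrite mem_iota => /andP[k_ge1 k_le] ->; split.
  + exists (Posz k); split => //.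
    by rewrite -[(k%:R : rat)]/((Posz k)%:~R) mu_bound; lia.
  + by rewrite /posrat divr_gt0 // ltr0n; lia.
Qed.

Lemma mem_grid_all (x : rat) : in_mu n x <-> x \in grid_all.
Proof.
split.
- move=> [p [-> p_le]]; move: p_le; rewrite mu_bound => p_le.
  apply/mapP; exists (absz (p + Posz (n * n)%N)); first by rewrite mem_iota; lia.
  by congr (_%:~R / _); lia.
- move=> /mapP[k]; rewrite mem_iota => /andP[_ k_le] ->.
  by exists (Posz k - Posz (n * n)%N); split; rewrite // mu_bound; lia.
Qed.

Lemma count_enum (P : pred rat) (s t : seq rat) : uniq s -> uniq t ->
  (forall x, (x \in s) && P x = (x \in t)) -> count P s = size t.
Proof.
move=> s_uniq t_uniq s_t; rewrite -size_filter; apply/perm_size/uniq_perm.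
- exact: filter_uniq.
- exact: t_uniq.
- by move=> x; rewrite mem_filter andbC.
Qed.

Lemma card_in_mu (l : Pfin) : (forall x, mem_fin x l <-> in_mu n x) ->
  [/\ card_in natpos l = n, card_in posrat l = (n * n)%N
    & card_in allrat l = (n * n).*2.+1].
Proof.
move=> l_mu; have l_uniq : uniq (sval l) by exact/lt_sorted_uniq/(svalP l).
split; rewrite /card_in.
- rewrite (count_enum l_uniq grid_nat_uniq) ?size_map ?size_iota // => x.
  by apply/andP/idP => [[/l_mu ? ?]|/mem_grid_nat[/l_mu ? ?]]; [apply/mem_grid_nat|].
- rewrite (count_enum l_uniq grid_pos_uniq) ?size_map ?size_iota // => x.
  by apply/andP/idP => [[/l_mu ? ?]|/mem_grid_pos[/l_mu ? ?]]; [apply/mem_grid_pos|].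
- rewrite (count_enum l_uniq grid_all_uniq) ?size_map ?size_iota // => x.
  by apply/andP/idP => [[/l_mu ? _]|/mem_grid_all/l_mu ?]; [apply/mem_grid_all|].
Qed.

End GridCounting.

(* Imported only now: Stdlib's reals rebind the %N scope used above. *)
From Stdlib Require Import Reals FunctionalExtensionality PropExtensionality.
Local Open Scope R_scope.

Lemma card_in_LambdaQ (l : Pfin) : in_LambdaQ l ->
  INR (card_in posrat l) = INR (card_in natpos l) * INR (card_in natpos l) /\
  INR (card_in allrat l) =
    2 * (INR (card_in natpos l) * INR (card_in natpos l)) + 1.
Proof.
move=> [m [_ l_mu]]; have [-> -> ->] := card_in_mu (fact_gt0 m) l_mu.
rewrite S_INR -addnn plus_INR mult_INR; split; ring.
Qed.

Section Quotient.

Variable I : FF -> Prop.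
Hypothesis I_ideal : is_ideal I.

Lemma I_ext (f g : FF) : I f -> (forall l, f l = g l) -> I g.
Proof. by move=> If fg; rewrite -(functional_extensionality _ _ fg). Qed.

Lemma I_add (f g : FF) : I f -> I g -> I (fun l => f l + g l).
Proof. by case: I_ideal => _ [add_closed _]; exact: add_closed. Qed.

Lemma I_opp (f : FF) : I f -> I (fun l => - f l).
Proof.
case: I_ideal => _ [_ I_mul] If.
by apply: (I_ext (I_mul f (fun _ => -1) If)) => l; ring.
Qed.

Lemma J_eq (f g : FF) : I (fun l => f l - g l) -> J I f = J I g.
Proof.
move=> Ifg; apply: functional_extensionality => h.
apply: propositional_extensionality; split => Ih.
- by apply: (I_ext (I_add Ih (I_opp Ifg))) => l; ring.
- by apply: (I_ext (I_add Ih Ifg)) => l; ring.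
Qed.

Lemma J_eq_inv (f g : FF) : J I f = J I g -> I (fun l => f l - g l).
Proof.
case: I_ideal => I0 _ fg.
have : J I g g by apply: (I_ext I0) => l; rewrite /= Rminus_diag.
by rewrite -fg.
Qed.

Lemma qmulJ (f g : FF) : qmul I (J I f) (J I g) = J I (fun l => f l * g l).
Proof.
case: I_ideal => _ [_ I_mul].
apply: functional_extensionality => h; apply: propositional_extensionality.
split => [[f' [g' [/J_eq_inv Ef [/J_eq_inv Eg Ih]]]]|Ih].
- apply: (I_ext (I_add (I_add (I_mul _ f Eg) (I_mul _ g' Ef)) (I_opp Ih))).
  by move=> l; ring.
- exists f, g; do 2!split => //.
  by apply: (I_ext (I_opp Ih)) => l; ring.
Qed.

Lemma qaddJ (f g : FF) : qadd I (J I f) (J I g) = J I (fun l => f l + g l).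
Proof.
apply: functional_extensionality => h; apply: propositional_extensionality.
split => [[f' [g' [/J_eq_inv Ef [/J_eq_inv Eg Ih]]]]|Ih].
- by apply: (I_ext (I_add (I_add Ef Eg) (I_opp Ih))) => l; ring.
- exists f, g; do 2!split => //.
  by apply: (I_ext (I_opp Ih)) => l; ring.
Qed.

Lemma J_eq_on_LambdaQ (f g : FF) :
  (forall phi, I0LambdaQ phi -> I phi) ->
  (forall l, in_LambdaQ l -> f l = g l) -> J I f = J I g.
Proof. by move=> I0_sub fg; apply/J_eq/I0_sub => l /fg ->; ring. Qed.

End Quotient.

Theorem mainTheorem16 (I : FF -> Prop) :
  fine_ideal I ->
  (forall phi, I0LambdaQ phi -> I phi) ->
  let alpha := numerosity I natpos in
  numerosity I posrat = qmul I alpha alpha /\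
  numerosity I allrat =
    qadd I (qmul I (qconst I 2%R) (qmul I alpha alpha)) (qconst I 1%R) /\
  NAP_P I natpos =
    qdiv I alpha (qadd I (qmul I (qconst I 2%R) (qmul I alpha alpha)) (qconst I 1%R)).
Proof.
move=> [[I_ideal _] _] I0_sub alpha.
rewrite /alpha /numerosity /qconst !(qmulJ I_ideal) (qaddJ I_ideal).
have n_allrat : J I (fun l => INR (card_in allrat l)) =
    J I (fun l => 2 * (INR (card_in natpos l) * INR (card_in natpos l)) + 1).
  by apply: (J_eq_on_LambdaQ I_ideal I0_sub) => l /card_in_LambdaQ[].
split; [|split] => //.
- by apply: (J_eq_on_LambdaQ I_ideal I0_sub) => l /card_in_LambdaQ[].
- by rewrite /NAP_P /numerosity n_allrat.
Qed.
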